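(* Assume $\mu_n\to0$ and $n^{1/2}\mu_n\to\infty$, and suppose $\theta_n\in\mathbb R$ satisfies $\theta_n/\mu_n\to\zeta\in\mathbb R\cup\{-\infty,\infty\}$. 1. If $\zeta=0$ and $n^{1/2}\theta_n\to\nu\in\mathbb R$, then $F_{A,n,\theta_n}$ converges weakly to the cdf $\mathbf 1(\cdot\ge-\nu)$ (pointmass at $-\nu$). 2. If $-\infty<\zeta<0$, or if $\zeta=0$ and $n^{1/2}\theta_n\to-\infty$, or if $\zeta=-\infty$ and $n^{1/2}\mu_n^2/\theta_n\to-\infty$, then $F_{A,n,\theta_n}(x)\to0$ for every $x\in\mathbb R$. If $0<\zeta<\infty$, or if $\zeta=0$ and $n^{1/2}\theta_n\to\infty$, or if $\zeta=\infty$ and $n^{1/2}\mu_n^2/\theta_n\to\infty$, then $F_{A,n,\theta_n}(x)\to1$ for every $x\in\mathbb R$. 3. If $|\zeta|=\infty$ and $n^{1/2}\mu_n^2/\theta_n\to r\in\mathbb R$, then $F_{A,n,\theta_n}$ converges weakly to the cdf $\Phi(\cdot+r)$.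
   Context: Gaussian location model: for each sample size $n$, $y_1,\dots,y_n$ are i.i.d. $N(\theta,1)$ with $\theta\in\mathbb R$ unknown; $\bar y$ is their mean. $P_{n,\theta}$ denotes the probability governing a sample of size $n$ when $\theta$ is the true parameter. Given a nonrandom tuning parameter $\mu_n>0$, the adaptive LASSO estimator is $\hat\theta_A=0$ if $|\bar y|\le\mu_n$ and $\hat\theta_A=\bar y-\mu_n^2/\bar y$ if $|\bar y|>\mu_n$. $F_{A,n,\theta}$ denotes the cdf of $n^{1/2}(\hat\theta_A-\theta)$ under $P_{n,\theta}$. $\Phi$ is the standard normal cdf. *)

From Stdlib Require Import Reals Lra ClassicalEpsilon.
Open Scope R_scope.

Definition phi (z : R) : R := exp (- z ^ 2 / 2) / sqrt (2 * PI).

Definition improper_integral (f : R -> R) (L : R) : Prop :=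
  forall eps, 0 < eps -> exists A, forall a b, a <= - A -> A <= b ->
    exists pr : Riemann_integrable f a b, Rabs (RiemannInt pr - L) < eps.

Definition gauss_prob (P : R -> bool) : R :=
  epsilon (inhabits 0)
    (fun L => improper_integral (fun z => if P z then phi z else 0) L).

Definition Rle_b (x y : R) : bool := if Rle_dec x y then true else false.

Definition Phi (x : R) : R := gauss_prob (fun z => Rle_b z x).

Definition adaptive_lasso (m ybar : R) : R :=
  if Rle_dec (Rabs ybar) m then 0 else ybar - m ^ 2 / ybar.

(* F_{A,n,theta}(x) = P_{n,theta}( sqrt n (thetaA - theta) <= x ), with
   tuning parameter mun.  Under P_{n,theta}, ybar = theta + Z / sqrt n with
   Z ~ N(0,1). *)
Definition F_A (n : nat) (mun theta x : R) : R :=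
  gauss_prob (fun z =>
    Rle_b (sqrt (INR n) * (adaptive_lasso mun (theta + z / sqrt (INR n)) - theta)) x).

Definition weak_conv (F : nat -> R -> R) (G : R -> R) : Prop :=
  forall x, continuity_pt G x -> Un_cv (fun n => F n x) (G x).

(* Writing [ybar = theta + Z / sqrt n] with [Z] standard normal, the adaptive LASSO with
   tuning parameter [m] is [m] times the monotone map [t |-> t - 1 / t] (thresholded at
   [|t| <= 1]) applied to [ybar / m], so [sqrt n (thetaA - theta) <= x] is the half-line
   event [Z <= x + sigma_n g(rho_n)], where [sigma_n = sqrt n mu_n],
   [rho_n = theta_n / mu_n + x / sigma_n] and [r + g r] is the threshold root of
   [t - 1 / t = r]. Thus [F_{A,n,theta_n}(x) = Phi (x + sigma_n g(rho_n))].
   The gap [g r] has the sign of [r] (with [g 0 = 1]), satisfies [|g r| >= 1 / (|r| + 1)]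
   and [r g r -> 1] as [|r| -> oo]. When [sigma_n / (|theta_n / mu_n| + 1) -> oo] the shift
   diverges with the eventual sign of [sqrt n theta_n + x], which gives parts 1 and 2;
   when [|theta_n / mu_n| -> oo] it behaves like [sigma_n mu_n / theta_n -> r], which gives
   part 3. The limits of [Phi] at infinity come from the Gaussian integral of
   MathComp-Analysis, transported to the Stdlib reals. *)

From Stdlib Require Import Reals Lra Lia ClassicalEpsilon FunctionalExtensionality.
From mathcomp Require all_boot all_order all_algebra.
From mathcomp Require all_classical all_reals all_analysis.
From mathcomp Require Rstruct Rstruct_topology.
From Coquelicot Require Coquelicot.
Open Scope R_scope.

(** * The Gaussian integral *)

Module GaussIntegral.
Import all_boot all_order all_algebra.
Import all_classical all_reals all_analysis.
Import Rstruct Rstruct_topology.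
Import Order.TTheory GRing.Theory Num.Theory.
Import numFieldNormedType.Exports.
Local Open Scope classical_set_scope.
Local Open Scope ring_scope.

Lemma RcosE (x : R) : Rtrigo_def.cos x = cos x.
Proof.
apply/esym; rewrite /Rtrigo_def.cos; case: exist_cos => y.
rewrite /cos_in /infinite_sum /= => cos_ub.
apply: (cvg_unique (@Rhausdorff _) (@cvg_cos_coeff' _ x)).
rewrite /mkset -cvg_shiftS /=; apply/(@cvgrPdist_lt _ R^o) => /= e /RltP /cos_ub[N Nub].
near=> n.
have nN : (n >= N)%coq_nat by apply/ssrnat.leP; near: n; exact: nbhs_infty_ge.
move: Nub => /(_ _ nN) /[!RdistE] /RltP /=.
rewrite distrC sum_f_R0E; congr (`| _ - _ | < e).
apply: eq_bigr => k _; rewrite /cos_coeff' /cos_n RdivE RpowE RpowE factE INRE.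
rewrite -exprnP /Rsqr !RmultE -expr2 -exprM.
have -> : (2 * k)%coq_nat = k.*2 by rewrite -mul2n.
by rewrite mulnC muln2 mulrAC.
Unshelve. all: by end_near. Qed.

Lemma R2E : IZR 2 = 2%:R.
Proof. by rewrite IZRposE INRE. Qed.

(* Both constants are twice the unique zero of the cosine in (0, 2). *)
Lemma RpiE : PI = pi.
Proof.
have h : PI / 2 = pi / 2.
  apply: cos_02_uniq.
  - have h1 := PI2_1; have h2 := PI_4.
    apply/andP; split; apply/RleP; rewrite -?RdivE -?R2E -?R0E; lra.
  - by rewrite -RcosE -RdivE cos_PI2.
  - by case: (@pihalf_02_cos_pihalf R).
  - exact: cos_pihalf.
by move: h; rewrite -!RdivE -!R2E => h; lra.
Qed.

Lemma derivable_pt_lim_cvg (f : R -> R) x l : derivable_pt_lim f x l ->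
  (fun h : R => h^-1 * (f (h + x) - f x)) @ (0 : R)^' --> l.
Proof.
move=> dl.
pose q (h : R) := if h == 0 then l else h^-1 * (f (h + x) - f x).
have cq : continuity_pt q 0.
  move=> e /dl [d hd]; exists (pos d); split; first exact: cond_pos.
  move=> h [[_ h0] hlt].
  have h0' : h <> 0 by move=> hh; apply: h0; rewrite hh.
  rewrite /q /= (negbTE (introN eqP h0')) eqxx.
  change (Rlt (Rdist h 0) d) in hlt; rewrite RdistE subr0 -RabsE in hlt.
  have -> : h^-1 * (f (h + x) - f x) = ((f (x + h) - f x) / h)%coqR.
    by rewrite (Rplus_comm x h) /Rdiv Rmult_comm.
  exact: hd.
have := (continuity_pt_cvg' q 0).1 cq.
rewrite {2}/q eqxx; apply: cvg_trans; apply: near_eq_cvg.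
near=> h; rewrite /q ifF //; apply/negbTE; near: h.
exact: nbhs_dnbhs_neq.
Unshelve. all: by end_near. Qed.

(* [R] seen as a [realType], so that MathComp's [derivable] and [derive1] apply to it. *)
Definition Rreal : realType := R.

Lemma derivable_pt_lim_derive1 {f : Rreal -> Rreal} {x l : Rreal} :
  derivable_pt_lim f x l -> derivable f x 1 /\ derive1 f x = l.
Proof.
move=> /derivable_pt_lim_cvg dl.
have dl' : (fun h : Rreal => h^-1 *: ((f \o shift x) (h *: 1) - f x)) @ (0 : Rreal)^' --> l.
  by move: dl; apply: cvg_trans; apply: near_eq_cvg; near=> h; rewrite /= /shift /= [h%:A]mulr1.
by split; [exact: (cvgP _ dl') | rewrite /derive1; apply: cvg_lim].
Unshelve. all: by end_near. Qed.

Lemma integral0_gauss_primitive (F : Rreal -> Rreal) (b : Rreal) :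
  (forall x, derivable_pt_lim F x (exp (- x ^ 2))%coqR) -> 0 < b ->
  gauss_integral_proof.integral0_gauss b = F b - F 0.
Proof.
move=> dF b0.
have dF' x := derivable_pt_lim_derive1 (dF x).
have cF x : {for x, continuous F}.
  apply/continuity_pt_cvg; apply: derivable_continuous_pt.
  by exists (exp (- x ^ 2))%coqR; apply: dF.
have := @continuous_FTC2 Rreal gauss_fun F 0 b b0.
rewrite /gauss_integral_proof.integral0_gauss /Rintegral => ->.
- by rewrite -EFinB.
- by apply: continuous_subspaceT; exact: continuous_gauss_fun.
- split; first by move=> x _; case: (dF' x).
  + exact/cvg_at_right_filter/cF.
  + exact/cvg_at_left_filter/cF.
- move=> x _; case: (dF' x) => _ ->.
  by rewrite /gauss_fun RexpE RpowE RoppE.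
Qed.

Lemma gauss_primitive_cvg (F : Rreal -> Rreal) :
  (forall x, derivable_pt_lim F x (exp (- x ^ 2))%coqR) -> F 0 = 0 ->
  forall eps, (0 < eps)%coqR -> exists M, forall x, (M <= x)%coqR ->
    (Rabs (F x - sqrt PI / 2) < eps)%coqR.
Proof.
move=> dF F0 eps /RltP e0.
have : F x @[x --> +oo] --> Num.sqrt pi / 2.
  have : Num.sqrt (@gauss_integral_proof.integral0_gauss Rreal x ^+ 2) @[x --> +oo]
      --> Num.sqrt (pi / 4).
    apply: continuous_cvg;
      [exact: sqrt_continuous | exact: gauss_integral_proof.cvg_integral0_gauss_sqr].
  rewrite sqrtrM ?pi_ge0 // sqrtrV // (_ : 4 = 2 ^+ 2); last by rewrite expr2 -natrM.
  rewrite sqrtr_sqr ger0_norm //.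
  apply: cvg_trans; apply: near_eq_cvg; near=> x.
  rewrite sqrtr_sqr ger0_norm; last exact: gauss_integral_proof.integral0_gauss_ge0.
  by rewrite (@integral0_gauss_primitive F) // F0 subr0.
move/cvgrPdist_lt => /(_ _ e0) [M [_ HM]].
exists (M + 1)%coqR => x Mx.
have /HM : M < x by apply/RltP; lra.
by rewrite distrC -RminusE -RabsE -RpiE -RsqrtE -R2E -RdivE => /RltP.
Unshelve. all: by end_near. Qed.

End GaussIntegral.

Import Coquelicot.Coquelicot.

(** * The standard normal cdf *)

Lemma Rbar_mult_pos_p_infty a : 0 < a -> Rbar_mult a p_infty = p_infty.
Proof.
  intro ha. rewrite Rbar_mult_comm. apply is_Rbar_mult_unique, is_Rbar_mult_p_infty_pos. exact ha.
Qed.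

Lemma is_lim_gauss_primitive (F : R -> R) :
  (forall x, derivable_pt_lim F x (exp (- x ^ 2))) -> F 0 = 0 ->
  is_lim F p_infty (sqrt PI / 2).
Proof.
  intros dF F0. apply is_lim_spec. intros eps.
  destruct (GaussIntegral.gauss_primitive_cvg F dF F0 eps (cond_pos eps)) as [M HM].
  exists M. intros x hx. apply HM. lra.
Qed.

Lemma phi_opp z : phi (- z) = phi z.
Proof. unfold phi. replace ((- z) ^ 2) with (z ^ 2) by ring. reflexivity. Qed.

Lemma continuous_phi z : continuous phi z.
Proof.
  apply (ex_derive_continuous (V := R_NormedModule)). unfold phi. auto_derive. exact I.
Qed.

Lemma ex_RInt_phi a b : ex_RInt phi a b.
Proof. apply (ex_RInt_continuous (V := R_CompleteNormedModule)). intros. apply continuous_phi. Qed.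

Lemma is_derive_RInt_phi x : is_derive (RInt phi 0) x (phi x).
Proof.
  apply is_derive_RInt with 0.
  - apply filter_forall. intro b. apply (RInt_correct (V := R_CompleteNormedModule)), ex_RInt_phi.
  - apply continuous_phi.
Qed.

Lemma RInt_phi_Chasles a b : RInt phi 0 b - RInt phi 0 a = RInt phi a b.
Proof.
  rewrite <- (RInt_Chasles phi 0 a b) by apply ex_RInt_phi.
  unfold plus. simpl. ring.
Qed.

Lemma RInt_phi_opp x : RInt phi 0 (- x) = - RInt phi 0 x.
Proof.
  assert (H := RInt_comp_lin phi (-1) 0 0 x (ex_RInt_phi _ _)).
  replace (-1 * 0 + 0) with 0 in H by ring. replace (-1 * x + 0) with (- x) in H by ring.
  rewrite <- H, <- (RInt_opp (V := R_CompleteNormedModule)) by apply ex_RInt_phi.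
  apply RInt_ext. intros z _. unfold scal, opp. simpl. unfold mult. simpl.
  replace (-1 * z + 0) with (- z) by ring. rewrite phi_opp. ring.
Qed.

(* The substitution z = sqrt 2 * y turns phi into exp (- y ^ 2) / sqrt PI. *)
Lemma is_lim_RInt_phi_p_infty : is_lim (RInt phi 0) p_infty (1 / 2).
Proof.
  assert (h2 : 0 < sqrt 2) by (apply sqrt_lt_R0; lra).
  assert (hPI : 0 < sqrt PI) by apply sqrt_lt_R0, PI_RGT_0.
  set (F := fun y => sqrt PI * RInt phi 0 (sqrt 2 * y)).
  assert (dF : forall y, derivable_pt_lim F y (exp (- y ^ 2))).
  { intro y. apply is_derive_Reals. unfold F.
    replace (exp (- y ^ 2)) with (sqrt PI * (sqrt 2 * phi (sqrt 2 * y))).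
    - apply is_derive_scal. apply (is_derive_comp (RInt phi 0) (fun y => sqrt 2 * y)).
      + apply is_derive_RInt_phi.
      + auto_derive; [exact I | ring].
    - unfold phi. rewrite sqrt_mult by (generalize PI_RGT_0; lra).
      replace ((sqrt 2 * y) ^ 2) with (sqrt 2 ^ 2 * y ^ 2) by ring.
      rewrite pow2_sqrt by lra.
      replace (- (2 * y ^ 2) / 2) with (- y ^ 2) by field. field. lra. }
  assert (F0 : F 0 = 0) by (unfold F; rewrite Rmult_0_r, RInt_point; apply Rmult_0_r).
  assert (HF := is_lim_gauss_primitive F dF F0).
  assert (HG : is_lim (fun y => F (/ sqrt 2 * y + 0)) p_infty (sqrt PI / 2)).
  { apply is_lim_comp_lin; [|apply Rinv_neq_0_compat; lra].
    rewrite Rbar_mult_pos_p_infty by (apply Rinv_0_lt_compat, h2).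
    exact HF. }
  apply is_lim_scal_l with (a := / sqrt PI) in HG.
  replace (Finite (1 / 2)) with (Rbar_mult (/ sqrt PI) (sqrt PI / 2))
    by (simpl; f_equal; field; lra).
  revert HG. apply is_lim_ext. intro y. unfold F.
  replace (sqrt 2 * (/ sqrt 2 * y + 0)) with y by (field; lra). field. lra.
Qed.

Lemma is_lim_RInt_phi_m_infty : is_lim (RInt phi 0) m_infty (- (1 / 2)).
Proof.
  assert (H : is_lim (fun y => RInt phi 0 (-1 * y + 0)) m_infty (1 / 2)).
  { apply is_lim_comp_lin; [|lra].
    rewrite Rbar_mult_comm,
      (is_Rbar_mult_unique _ _ _ (is_Rbar_mult_m_infty_neg (-1) ltac:(simpl; lra))).
    exact is_lim_RInt_phi_p_infty. }
  apply is_lim_opp in H. revert H. apply is_lim_ext. intro y.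
  replace (-1 * y + 0) with (- y) by ring. rewrite RInt_phi_opp. ring.
Qed.

Lemma improper_integral_unique f L1 L2 :
  improper_integral f L1 -> improper_integral f L2 -> L1 = L2.
Proof.
  intros H1 H2. apply Rminus_diag_uniq, Rabs_eq_0.
  apply Rle_antisym; [|apply Rabs_pos]. apply le_epsilon. intros eps heps.
  destruct (H1 (eps / 2) ltac:(lra)) as [A1 HA1], (H2 (eps / 2) ltac:(lra)) as [A2 HA2].
  assert (hA1 := Rmax_l A1 A2). assert (hA2 := Rmax_r A1 A2). set (A := Rmax A1 A2) in *.
  destruct (HA1 (- A) A ltac:(lra) ltac:(lra)) as [p1 hp1].
  destruct (HA2 (- A) A ltac:(lra) ltac:(lra)) as [p2 hp2].
  rewrite (RiemannInt_P5 p2 p1) in hp2.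
  replace (L1 - L2) with (- (RiemannInt p1 - L1) + (RiemannInt p1 - L2)) by ring.
  assert (h := Rabs_triang (- (RiemannInt p1 - L1)) (RiemannInt p1 - L2)).
  rewrite Rabs_Ropp in h. lra.
Qed.

Lemma improper_integral_phi_le c :
  improper_integral (fun z => if Rle_b z c then phi z else 0) (RInt phi 0 c + 1 / 2).
Proof.
  set (f := fun z => if Rle_b z c then phi z else 0).
  intros eps heps.
  destruct (proj2 (is_lim_spec _ _ _) is_lim_RInt_phi_m_infty (mkposreal eps heps)) as [M HM].
  exists (Rmax (Rabs c + 1) (- M + 1)). intros a b ha hb.
  assert (hc1 := Rmax_l (Rabs c + 1) (- M + 1)). assert (hc2 := Rmax_r (Rabs c + 1) (- M + 1)).
  assert (hc := Rle_abs c). assert (hc' := Rle_abs (- c)). rewrite Rabs_Ropp in hc'.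
  assert (Hac : forall z, Rmin a c < z < Rmax a c -> phi z = f z).
  { intros z hz. rewrite Rmin_left, Rmax_right in hz by lra.
    unfold f, Rle_b. destruct (Rle_dec z c); [reflexivity | lra]. }
  assert (Hcb : forall z, Rmin c b < z < Rmax c b -> 0 = f z).
  { intros z hz. rewrite Rmin_left, Rmax_right in hz by lra.
    unfold f, Rle_b. destruct (Rle_dec z c); [lra | reflexivity]. }
  assert (X1 : ex_RInt f a c)
    by exact (ex_RInt_ext (V := R_NormedModule) _ _ _ _ Hac (ex_RInt_phi a c)).
  assert (X2 : ex_RInt f c b)
    by exact (ex_RInt_ext (V := R_NormedModule) _ _ _ _ Hcb (ex_RInt_const c b 0)).
  assert (X : ex_RInt f a b) by exact (ex_RInt_Chasles (V := R_NormedModule) _ _ _ _ X1 X2).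
  exists (ex_RInt_Reals_0 _ _ _ X).
  rewrite <- RInt_Reals, <- (RInt_Chasles (V := R_CompleteNormedModule) f a c b X1 X2).
  rewrite <- (RInt_ext (V := R_CompleteNormedModule) _ _ _ _ Hac).
  rewrite <- (RInt_ext (V := R_CompleteNormedModule) _ _ _ _ Hcb).
  rewrite RInt_const, <- RInt_phi_Chasles. unfold plus, scal. simpl. unfold mult. simpl.
  replace (RInt phi 0 c - RInt phi 0 a + (b - c) * 0 - (RInt phi 0 c + 1 / 2))
    with (- (RInt phi 0 a - - (1 / 2))) by ring. rewrite Rabs_Ropp.
  apply HM. lra.
Qed.

Lemma Phi_RInt_phi : Phi = fun c => RInt phi 0 c + 1 / 2.
Proof.
  apply functional_extensionality. intro c. unfold Phi, gauss_prob.
  apply improper_integral_unique with (fun z => if Rle_b z c then phi z else 0).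
  - apply epsilon_spec. exists (RInt phi 0 c + 1 / 2). apply improper_integral_phi_le.
  - apply improper_integral_phi_le.
Qed.

Lemma continuous_Phi x : continuous Phi x.
Proof.
  rewrite Phi_RInt_phi. apply (ex_derive_continuous (V := R_NormedModule)).
  exists (phi x + 0).
  exact (is_derive_plus (V := R_NormedModule) _ (fun _ => 1 / 2) x _ 0
           (is_derive_RInt_phi x) (is_derive_const _ _)).
Qed.

Lemma is_lim_Phi_p_infty : is_lim Phi p_infty 1.
Proof.
  rewrite Phi_RInt_phi.
  replace (Finite 1) with (Rbar_plus (1 / 2) (1 / 2)) by (simpl; f_equal; lra).
  apply is_lim_plus'; [apply is_lim_RInt_phi_p_infty | apply is_lim_const].
Qed.

Lemma is_lim_Phi_m_infty : is_lim Phi m_infty 0.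
Proof.
  rewrite Phi_RInt_phi.
  replace (Finite 0) with (Rbar_plus (- (1 / 2)) (1 / 2)) by (simpl; f_equal; lra).
  apply is_lim_plus'; [apply is_lim_RInt_phi_m_infty | apply is_lim_const].
Qed.

(** * The adaptive LASSO threshold *)

(* [r + lasso_gap r] solves [t - 1 / t = r] with [|t| >= 1], taking [t = 1] at [r = 0]. *)
Definition lasso_gap (r : R) : R :=
  if Rle_dec 0 r then (sqrt (r ^ 2 + 4) - r) / 2 else - ((sqrt (r ^ 2 + 4) + r) / 2).

Lemma sqrt_sq_add4_bounds r :
  let S := sqrt (r ^ 2 + 4) in S * S = r ^ 2 + 4 /\ Rabs r < S /\ 2 <= S /\ S <= Rabs r + 2.
Proof.
  intro S. assert (hSS : S * S = r ^ 2 + 4) by (apply sqrt_sqrt; nra).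
  assert (hS : 0 <= S) by apply sqrt_pos.
  assert (ha : Rabs r * Rabs r = r ^ 2) by (rewrite <- Rabs_mult, Rabs_right; nra).
  assert (ha0 := Rabs_pos r). repeat split; nra.
Qed.

Lemma adaptive_lasso_scale m y : 0 < m -> adaptive_lasso m y = m * adaptive_lasso 1 (y / m).
Proof.
  intro hm. unfold adaptive_lasso.
  assert (E : Rabs (y / m) = Rabs y / m).
  { unfold Rdiv. rewrite Rabs_mult, Rabs_inv, (Rabs_right m) by lra. reflexivity. }
  assert (Hle : Rabs y <= m <-> Rabs y / m <= 1).
  { split; intro h.
    - apply Rmult_le_reg_r with m; [lra|]. field_simplify; lra.
    - apply Rmult_le_reg_r with (/ m); [apply Rinv_0_lt_compat; lra|].
      rewrite Rinv_r by lra. exact h. }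
  rewrite E. destruct (Rle_dec (Rabs y) m), (Rle_dec (Rabs y / m) 1); try tauto.
  - ring.
  - assert (y <> 0) by (intro e; subst; rewrite Rabs_R0 in n; lra). field. lra.
Qed.

Lemma adaptive_lasso1_le_iff r t : adaptive_lasso 1 t <= r <-> t <= r + lasso_gap r.
Proof.
  destruct (sqrt_sq_add4_bounds r) as (hSS & hS1 & hS2 & _).
  assert (hr1 := Rle_abs r). assert (hr2 := Rle_abs (- r)). rewrite Rabs_Ropp in hr2.
  assert (ht1 := Rle_abs t). assert (ht2 := Rle_abs (- t)). rewrite Rabs_Ropp in ht2.
  unfold adaptive_lasso, lasso_gap. set (S := sqrt (r ^ 2 + 4)) in *.
  destruct (Rle_dec (Rabs t) 1) as [ht|ht].
  - destruct (Rle_dec 0 r); split; intro; lra.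
  - assert (ht0 : t <> 0) by (intro e; subst; rewrite Rabs_R0 in ht; lra).
    assert (hu : t * (1 ^ 2 / t) = 1) by (field; exact ht0).
    set (u := 1 ^ 2 / t) in *.
    assert (hq : (t - (r - S) / 2) * (t - (r + S) / 2) = t * t - r * t - 1) by nra.
    assert (htb : 1 < t \/ t < -1)
      by (destruct (Rcase_abs t); [rewrite Rabs_left in ht | rewrite Rabs_right in ht]; lra).
    destruct htb, (Rle_dec 0 r).
    + assert (0 < u < 1) by nra. split; intro; nra.
    + assert (0 < u < 1) by nra. split; intro; lra.
    + assert (-1 < u < 0) by nra. split; intro; lra.
    + assert (-1 < u < 0) by nra. split; intro h.
      * assert (t * (t - u - r) >= 0) by nra. nra.
      * assert (t * t - r * t - 1 >= 0) by nra. nra.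
Qed.

Lemma adaptive_lasso_le_iff m r y :
  0 < m -> adaptive_lasso m y <= m * r <-> y <= m * (r + lasso_gap r).
Proof.
  intro hm. rewrite adaptive_lasso_scale by exact hm.
  split; intro h.
  - apply Rmult_le_reg_l in h; [|exact hm]. apply adaptive_lasso1_le_iff in h.
    apply Rmult_le_compat_l with (r := m) in h; [|lra].
    replace (m * (y / m)) with y in h by (field; lra). exact h.
  - apply Rmult_le_compat_l; [lra|]. apply adaptive_lasso1_le_iff.
    apply Rmult_le_reg_l with m; [exact hm|].
    replace (m * (y / m)) with y by (field; lra). exact h.
Qed.

Lemma lasso_gap_pos r : 0 <= r -> 0 < lasso_gap r.
Proof.
  intro hr. destruct (sqrt_sq_add4_bounds r) as (_ & hS & _).
  rewrite Rabs_right in hS by lra. unfold lasso_gap. destruct (Rle_dec 0 r); lra.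
Qed.

Lemma lasso_gap_neg r : r < 0 -> lasso_gap r < 0.
Proof.
  intro hr. destruct (sqrt_sq_add4_bounds r) as (_ & hS & _).
  rewrite Rabs_left in hS by lra. unfold lasso_gap. destruct (Rle_dec 0 r); lra.
Qed.

Lemma lasso_gap_abs r : Rabs (lasso_gap r) = (sqrt (r ^ 2 + 4) - Rabs r) / 2.
Proof.
  destruct (Rle_dec 0 r) as [hr|hr].
  - rewrite (Rabs_right r) by lra.
    rewrite Rabs_right by (apply Rle_ge, Rlt_le, lasso_gap_pos, hr).
    unfold lasso_gap. destruct (Rle_dec 0 r); [reflexivity | lra].
  - rewrite (Rabs_left r) by lra. rewrite Rabs_left by (apply lasso_gap_neg; lra).
    unfold lasso_gap. destruct (Rle_dec 0 r); [lra | field].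
Qed.

Lemma lasso_gap_abs_ge r : / (Rabs r + 1) <= Rabs (lasso_gap r).
Proof.
  destruct (sqrt_sq_add4_bounds r) as (hSS & hS1 & hS2 & hS3).
  assert (ha := Rabs_pos r).
  assert (ha2 : Rabs r * Rabs r = r ^ 2) by (rewrite <- Rabs_mult, Rabs_right; nra).
  rewrite lasso_gap_abs. set (S := sqrt (r ^ 2 + 4)) in *.
  apply Rmult_le_reg_l with (Rabs r + 1); [lra|].
  rewrite Rinv_r by lra. nra.
Qed.

Lemma lasso_gap_mul_near_1 r : r <> 0 -> Rabs (r * lasso_gap r - 1) <= / Rabs r.
Proof.
  intro hr. destruct (sqrt_sq_add4_bounds r) as (hSS & hS1 & hS2 & hS3).
  assert (ha : 0 < Rabs r) by (apply Rabs_pos_lt; exact hr).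
  assert (ha2 : Rabs r * Rabs r = r ^ 2) by (rewrite <- Rabs_mult, Rabs_right; nra).
  assert (hsg : r * lasso_gap r = Rabs r * Rabs (lasso_gap r)).
  { rewrite <- Rabs_mult, Rabs_right; [reflexivity|].
    destruct (Rle_dec 0 r).
    - assert (h := lasso_gap_pos r r0). nra.
    - assert (h := lasso_gap_neg r ltac:(lra)). nra. }
  rewrite hsg, lasso_gap_abs. set (S := sqrt (r ^ 2 + 4)) in *. set (a := Rabs r) in *.
  assert (E : (S - a) * (S + a) = 4) by nra.
  assert (h0 : 0 <= 1 - a * ((S - a) / 2)) by nra.
  rewrite Rabs_left1 by lra.
  apply Rmult_le_reg_l with a; [lra|]. rewrite Rinv_r by lra. nra.
Qed.

Lemma Rle_b_iff a b c d : (a <= b <-> c <= d) -> Rle_b a b = Rle_b c d.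
Proof. intro h. unfold Rle_b. destruct (Rle_dec a b), (Rle_dec c d); tauto. Qed.

Lemma Rmult_le_iff_l s a b : 0 < s -> s * a <= s * b <-> a <= b.
Proof.
  intro hs. split; intro h; [apply Rmult_le_reg_l with s | apply Rmult_le_compat_l]; lra.
Qed.

Lemma F_A_Phi n m theta x : (1 <= n)%nat -> 0 < m ->
  F_A n m theta x =
  Phi (x + sqrt (INR n) * m * lasso_gap (theta / m + x / (sqrt (INR n) * m))).
Proof.
  intros hn hm. unfold F_A, Phi. set (s := sqrt (INR n)).
  assert (hs : 0 < s) by (apply sqrt_lt_R0, lt_0_INR; lia).
  set (r := theta / m + x / (s * m)).
  assert (hr : s * (m * r - theta) = x) by (unfold r; field; lra).
  f_equal. apply functional_extensionality. intro z. apply Rle_b_iff.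
  transitivity (adaptive_lasso m (theta + z / s) <= m * r).
  { rewrite <- hr at 1. rewrite Rmult_le_iff_l by exact hs. split; intro; lra. }
  rewrite adaptive_lasso_le_iff, <- (Rmult_le_iff_l s) by assumption.
  replace (s * (theta + z / s)) with (s * theta + z) by (field; lra).
  replace (x + s * m * lasso_gap r) with (s * (m * (r + lasso_gap r)) - s * theta)
    by (rewrite <- hr; ring).
  split; intro; lra.
Qed.

(** * Asymptotics *)

Lemma eventually_lt_of_lim u l (c : R) :
  is_lim_seq u l -> Rbar_lt l c -> eventually (fun n => u n < c).
Proof. intros H hl. exact (H _ (open_Rbar_lt' l c hl)). Qed.

Lemma eventually_gt_of_lim u l (c : R) :
  is_lim_seq u l -> Rbar_lt c l -> eventually (fun n => c < u n).
Proof. intros H hl. exact (H _ (open_Rbar_gt' l c hl)). Qed.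

Lemma is_lim_seq_Phi u (l : R) : is_lim_seq u l -> is_lim_seq (fun n => Phi (u n)) (Phi l).
Proof. intro Hu. apply filterlim_comp with (locally l); [exact Hu | apply continuous_Phi]. Qed.

Lemma is_lim_seq_Phi_p_infty u : is_lim_seq u p_infty -> is_lim_seq (fun n => Phi (u n)) 1.
Proof.
  apply is_lim_comp_seq; [exact is_lim_Phi_p_infty | apply filter_forall; discriminate].
Qed.

Lemma is_lim_seq_Phi_m_infty u : is_lim_seq u m_infty -> is_lim_seq (fun n => Phi (u n)) 0.
Proof.
  apply is_lim_comp_seq; [exact is_lim_Phi_m_infty | apply filter_forall; discriminate].
Qed.

Lemma is_lim_seq_inv_abs u :
  is_lim_seq (fun n => Rabs (u n)) p_infty -> is_lim_seq (fun n => / u n) 0.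
Proof.
  intro H. apply is_lim_seq_abs_0.
  apply is_lim_seq_ext with (fun n => / Rabs (u n)); [intro n; symmetry; apply Rabs_inv |].
  apply (is_lim_seq_inv _ p_infty H). discriminate.
Qed.

Lemma eventually_neq_0_of_abs u :
  is_lim_seq (fun n => Rabs (u n)) p_infty -> eventually (fun n => u n <> 0).
Proof.
  intro H. generalize (eventually_gt_of_lim _ _ 0 H I).
  apply filter_imp. intros n h e. rewrite e, Rabs_R0 in h. lra.
Qed.

Lemma is_lim_seq_mul_lasso_gap rho :
  is_lim_seq (fun n => Rabs (rho n)) p_infty ->
  is_lim_seq (fun n => rho n * lasso_gap (rho n)) 1.
Proof.
  intro Hrho.
  apply is_lim_seq_ext with (fun n => (rho n * lasso_gap (rho n) - 1) + 1); [intro; ring |].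
  replace (Finite 1) with (Rbar_plus 0 1) by (simpl; f_equal; ring).
  apply is_lim_seq_plus'; [| apply is_lim_seq_const].
  apply is_lim_seq_abs_0, is_lim_seq_le_le_loc with (fun _ => 0) (fun n => / Rabs (rho n)).
  - generalize (eventually_neq_0_of_abs _ Hrho). apply filter_imp. intros n h.
    split; [apply Rabs_pos | apply lasso_gap_mul_near_1, h].
  - apply is_lim_seq_const.
  - apply is_lim_seq_ext with (fun n => Rabs (/ rho n)); [intro; apply Rabs_inv |].
    replace (Finite 0) with (Rbar_abs 0) by (simpl; rewrite Rabs_R0; reflexivity).
    apply is_lim_seq_abs, is_lim_seq_inv_abs, Hrho.
Qed.

Section LassoAsymptotics.

Variables (sigma eta : nat -> R) (x : R).
Hypothesis sigma_infty : is_lim_seq sigma p_infty.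

Lemma is_lim_seq_div_sigma : is_lim_seq (fun n => x / sigma n) 0.
Proof.
  replace (Finite 0) with (Rbar_mult x (Rbar_inv p_infty)) by (simpl; f_equal; ring).
  apply is_lim_seq_scal_l, is_lim_seq_inv; [exact sigma_infty | discriminate].
Qed.

Lemma eventually_sigma_pos : eventually (fun n => 0 < sigma n).
Proof. exact (eventually_gt_of_lim _ _ 0 sigma_infty I). Qed.

Lemma eventually_div_sigma_small : eventually (fun n => Rabs (x / sigma n) < 1).
Proof.
  apply (eventually_lt_of_lim _ _ 1 (is_lim_seq_abs _ _ is_lim_seq_div_sigma)).
  simpl. rewrite Rabs_R0. lra.
Qed.

Lemma is_lim_seq_sigma_abs_gap :
  is_lim_seq (fun n => sigma n / (Rabs (eta n) + 1)) p_infty ->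
  is_lim_seq (fun n => sigma n * Rabs (lasso_gap (eta n + x / sigma n))) p_infty.
Proof.
  intro H. apply is_lim_seq_scal_l with (a := / 2) in H.
  rewrite Rbar_mult_pos_p_infty in H by lra.
  apply is_lim_seq_le_p_loc with (2 := H).
  generalize (filter_and _ _ eventually_sigma_pos eventually_div_sigma_small).
  apply filter_imp. intros n [hs hx].
  set (rho := eta n + x / sigma n).
  assert (he := Rabs_pos (eta n)). assert (hr := Rabs_pos rho).
  assert (hrho : Rabs rho + 1 <= 2 * (Rabs (eta n) + 1))
    by (assert (h := Rabs_triang (eta n) (x / sigma n)); fold rho in h; lra).
  assert (hg := lasso_gap_abs_ge rho).
  apply Rle_trans with (sigma n * / (Rabs rho + 1)); [|apply Rmult_le_compat_l; lra].
  unfold Rdiv. rewrite <- Rmult_assoc, (Rmult_comm (/ 2)), Rmult_assoc.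
  apply Rmult_le_compat_l; [lra|].
  rewrite <- Rinv_mult. apply Rinv_le_contravar; lra.
Qed.

Lemma is_lim_seq_div_abs_succ_of_cv (l : R) :
  is_lim_seq eta l -> is_lim_seq (fun n => sigma n / (Rabs (eta n) + 1)) p_infty.
Proof.
  intro H. apply is_lim_seq_div with p_infty (Rabs l + 1).
  - exact sigma_infty.
  - apply is_lim_seq_plus'; [apply (is_lim_seq_abs _ l H) | apply is_lim_seq_const].
  - assert (h := Rabs_pos l). intro e. injection e. lra.
  - apply is_Rbar_mult_p_infty_pos. simpl. assert (h := Rabs_pos l).
    apply Rinv_0_lt_compat. lra.
Qed.

Lemma is_lim_seq_div_abs_succ_of_infty :
  is_lim_seq (fun n => Rabs (eta n)) p_infty ->
  is_lim_seq (fun n => Rabs (sigma n / eta n)) p_infty ->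
  is_lim_seq (fun n => sigma n / (Rabs (eta n) + 1)) p_infty.
Proof.
  intros Heta H. apply is_lim_seq_scal_l with (a := / 2) in H.
  rewrite Rbar_mult_pos_p_infty in H by lra.
  apply is_lim_seq_le_p_loc with (2 := H).
  generalize (filter_and _ _ eventually_sigma_pos (eventually_gt_of_lim _ _ 1 Heta I)).
  apply filter_imp. intros n [hs he].
  unfold Rdiv. rewrite Rabs_mult, Rabs_inv, (Rabs_right (sigma n)) by lra.
  rewrite <- Rmult_assoc, (Rmult_comm (/ 2)), Rmult_assoc.
  apply Rmult_le_compat_l; [lra|].
  rewrite <- Rinv_mult. apply Rinv_le_contravar; lra.
Qed.

Lemma is_lim_seq_lasso_arg (l : Rbar) :
  is_lim_seq eta l -> is_lim_seq (fun n => eta n + x / sigma n) l.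
Proof.
  intro H. rewrite <- (Rbar_plus_0_r l).
  apply is_lim_seq_plus with l 0; [exact H | exact is_lim_seq_div_sigma |].
  apply Rbar_plus_correct. destruct l; exact I.
Qed.

Lemma eventually_sigma_eta_add_lt (l : Rbar) :
  is_lim_seq eta l -> Rbar_lt l 0 -> eventually (fun n => sigma n * eta n + x < 0).
Proof.
  intros H hl.
  generalize (filter_and _ _ eventually_sigma_pos
    (eventually_lt_of_lim _ _ 0 (is_lim_seq_lasso_arg l H) hl)).
  apply filter_imp. intros n [hs h].
  replace (sigma n * eta n + x) with (sigma n * (eta n + x / sigma n)) by (field; lra). nra.
Qed.

Lemma eventually_sigma_eta_add_gt (l : Rbar) :
  is_lim_seq eta l -> Rbar_lt 0 l -> eventually (fun n => 0 < sigma n * eta n + x).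
Proof.
  intros H hl.
  generalize (filter_and _ _ eventually_sigma_pos
    (eventually_gt_of_lim _ _ 0 (is_lim_seq_lasso_arg l H) hl)).
  apply filter_imp. intros n [hs h].
  replace (sigma n * eta n + x) with (sigma n * (eta n + x / sigma n)) by (field; lra). nra.
Qed.

Lemma is_lim_seq_Phi_lasso_0 :
  is_lim_seq (fun n => sigma n / (Rabs (eta n) + 1)) p_infty ->
  eventually (fun n => sigma n * eta n + x < 0) ->
  is_lim_seq (fun n => Phi (x + sigma n * lasso_gap (eta n + x / sigma n))) 0.
Proof.
  intros H Hneg. apply is_lim_seq_Phi_m_infty.
  apply is_lim_seq_ext_loc with (fun n => x + - (sigma n * Rabs (lasso_gap (eta n + x / sigma n)))).
  - generalize (filter_and _ _ eventually_sigma_pos Hneg). apply filter_imp. intros n [hs hn].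
    assert (E : sigma n * (eta n + x / sigma n) = sigma n * eta n + x) by (field; lra).
    rewrite Rabs_left by (apply lasso_gap_neg; nra). ring.
  - apply is_lim_seq_plus with x m_infty; [apply is_lim_seq_const | | reflexivity].
    apply (is_lim_seq_opp _ p_infty), is_lim_seq_sigma_abs_gap, H.
Qed.

Lemma is_lim_seq_Phi_lasso_1 :
  is_lim_seq (fun n => sigma n / (Rabs (eta n) + 1)) p_infty ->
  eventually (fun n => 0 < sigma n * eta n + x) ->
  is_lim_seq (fun n => Phi (x + sigma n * lasso_gap (eta n + x / sigma n))) 1.
Proof.
  intros H Hpos. apply is_lim_seq_Phi_p_infty.
  apply is_lim_seq_ext_loc with (fun n => x + sigma n * Rabs (lasso_gap (eta n + x / sigma n))).
  - generalize (filter_and _ _ eventually_sigma_pos Hpos). apply filter_imp. intros n [hs hn].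
    assert (E : sigma n * (eta n + x / sigma n) = sigma n * eta n + x) by (field; lra).
    rewrite Rabs_right by (apply Rle_ge, Rlt_le, lasso_gap_pos; nra). reflexivity.
  - apply is_lim_seq_plus with x p_infty; [apply is_lim_seq_const | | reflexivity].
    apply is_lim_seq_sigma_abs_gap, H.
Qed.

Lemma is_lim_seq_abs_lasso_arg :
  is_lim_seq (fun n => Rabs (eta n)) p_infty ->
  is_lim_seq (fun n => Rabs (eta n + x / sigma n)) p_infty.
Proof.
  intro Heta. apply is_lim_seq_le_p_loc with (fun n => Rabs (eta n) + - 1).
  - generalize eventually_div_sigma_small. apply filter_imp. intros n hx.
    assert (h := Rabs_triang (eta n + x / sigma n) (- (x / sigma n))).
    rewrite Rabs_Ropp in h.
    replace (eta n + x / sigma n + - (x / sigma n)) with (eta n) in h by ring. lra.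
  - apply is_lim_seq_plus with p_infty (-1); [exact Heta | apply is_lim_seq_const | easy].
Qed.

Lemma is_lim_seq_sigma_div_lasso_arg (r : R) :
  is_lim_seq (fun n => Rabs (eta n)) p_infty ->
  is_lim_seq (fun n => sigma n / eta n) r ->
  is_lim_seq (fun n => sigma n / (eta n + x / sigma n)) r.
Proof.
  intros Heta Hr.
  assert (Hrho := is_lim_seq_abs_lasso_arg Heta).
  apply is_lim_seq_ext_loc with
    (fun n => sigma n / eta n - x * (/ eta n * / (eta n + x / sigma n))).
  - generalize (filter_and _ _ (filter_and _ _ (eventually_neq_0_of_abs _ Hrho)
      (eventually_neq_0_of_abs _ Heta)) eventually_sigma_pos).
    apply filter_imp. intros n [[h1 h2] h3].
    field. repeat split; [lra | | exact h2].
    intro e. apply h1. replace (eta n + x / sigma n) with ((eta n * sigma n + x) / sigma n)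
      by (field; lra).
    rewrite e. unfold Rdiv. ring.
  - replace (Finite r) with (Finite (r - x * (0 * 0))) by (f_equal; ring).
    apply is_lim_seq_minus'; [exact Hr |].
    apply (is_lim_seq_scal_l _ x (0 * 0)).
    apply is_lim_seq_mult'; apply is_lim_seq_inv_abs; assumption.
Qed.

(* Since [rho * lasso_gap rho -> 1] as [|rho| -> oo], the shift [sigma * lasso_gap rho]
   behaves like [sigma / rho], hence like [sigma / eta]. *)
Lemma is_lim_seq_Phi_lasso (r : R) :
  is_lim_seq (fun n => Rabs (eta n)) p_infty ->
  is_lim_seq (fun n => sigma n / eta n) r ->
  is_lim_seq (fun n => Phi (x + sigma n * lasso_gap (eta n + x / sigma n))) (Phi (x + r)).
Proof.
  intros Heta Hr. apply is_lim_seq_Phi.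
  assert (Hrho := is_lim_seq_abs_lasso_arg Heta).
  apply is_lim_seq_ext_loc with (fun n => x + sigma n / (eta n + x / sigma n) *
    ((eta n + x / sigma n) * lasso_gap (eta n + x / sigma n))).
  - generalize (eventually_neq_0_of_abs _ Hrho). apply filter_imp. intros n h.
    set (rho := eta n + x / sigma n) in *. field. exact h.
  - replace (Finite (x + r)) with (Finite (x + r * 1)) by (f_equal; ring).
    apply is_lim_seq_plus'; [apply is_lim_seq_const | apply is_lim_seq_mult'].
    + exact (is_lim_seq_sigma_div_lasso_arg r Heta Hr).
    + exact (is_lim_seq_mul_lasso_gap _ Hrho).
Qed.

End LassoAsymptotics.

Lemma continuity_pt_step_neq a x :
  continuity_pt (fun y => if Rle_dec a y then 1 else 0) x -> x <> a.
Proof.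
  intros H ->. destruct (H (1 / 2) ltac:(lra)) as [d [hd Hd]].
  specialize (Hd (a - d / 2)).
  assert (hdist : D_x no_cond a (a - d / 2) /\ R_dist (a - d / 2) a < d).
  { split; [split; [exact I | lra] |]. unfold R_dist.
    replace (a - d / 2 - a) with (- (d / 2)) by ring. rewrite Rabs_Ropp, Rabs_right; lra. }
  specialize (Hd hdist). simpl in Hd. unfold R_dist in Hd.
  destruct (Rle_dec a (a - d / 2)); [lra|]. destruct (Rle_dec a a); [|lra].
  rewrite Rminus_0_l, Rabs_Ropp, Rabs_R1 in Hd. lra.
Qed.

Lemma is_lim_seq_m_infty_of_cv_infty_opp u : cv_infty (fun n => - u n) -> is_lim_seq u m_infty.
Proof.
  intro H. apply is_lim_seq_p_infty_Reals, (is_lim_seq_opp _ p_infty) in H.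
  revert H. apply is_lim_seq_ext. intro. apply Ropp_involutive.
Qed.

Lemma eventually_ge_1 : eventually (fun n => (1 <= n)%nat).
Proof. exists 1%nat. tauto. Qed.

Section AdaptiveLassoLimits.

Variable mu : nat -> R.
Hypothesis mu_pos : forall n, (1 <= n)%nat -> 0 < mu n.
Hypothesis sqrt_mu_infty : cv_infty (fun n => sqrt (INR n) * mu n).

Let sigma_infty : is_lim_seq (fun n => sqrt (INR n) * mu n) p_infty.
Proof. apply is_lim_seq_p_infty_Reals, sqrt_mu_infty. Qed.

Lemma eventually_sqrt_mu_mul_ratio theta : eventually (fun n =>
  sqrt (INR n) * mu n * (theta n / mu n) = sqrt (INR n) * theta n).
Proof.
  generalize eventually_ge_1. apply filter_imp. intros n hn.
  assert (h := mu_pos n hn). field. lra.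
Qed.

(* No side condition: Rocq's [/ 0 = 0] makes both sides vanish when [theta n = 0]. *)
Lemma sqrt_mu2_div_eq theta n :
  sqrt (INR n) * mu n ^ 2 / theta n = sqrt (INR n) * mu n / (theta n / mu n).
Proof. unfold Rdiv. rewrite Rinv_mult, Rinv_inv. ring. Qed.

Lemma Un_cv_F_A theta x (l : R) :
  is_lim_seq (fun n => Phi (x + sqrt (INR n) * mu n *
                            lasso_gap (theta n / mu n + x / (sqrt (INR n) * mu n)))) l ->
  Un_cv (fun n => F_A n (mu n) (theta n) x) l.
Proof.
  intro H. apply is_lim_seq_Reals. revert H. apply is_lim_seq_ext_loc.
  generalize eventually_ge_1. apply filter_imp. intros n hn.
  symmetry. apply F_A_Phi, mu_pos; exact hn.
Qed.

Lemma eventually_sigma_eta_of_sqrt_theta theta (P : R -> Prop) :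
  eventually (fun n => P (sqrt (INR n) * theta n)) ->
  eventually (fun n => P (sqrt (INR n) * mu n * (theta n / mu n))).
Proof.
  intro H. generalize (filter_and _ _ H (eventually_sqrt_mu_mul_ratio theta)).
  apply filter_imp. intros n [h e]. rewrite e. exact h.
Qed.

Lemma is_lim_seq_sigma_div_eta theta (l : Rbar) :
  is_lim_seq (fun n => sqrt (INR n) * mu n ^ 2 / theta n) l ->
  is_lim_seq (fun n => sqrt (INR n) * mu n / (theta n / mu n)) l.
Proof. apply is_lim_seq_ext. intro n. apply sqrt_mu2_div_eq. Qed.

Lemma F_A_weak_conv_pointmass theta nu :
  Un_cv (fun n => theta n / mu n) 0 -> Un_cv (fun n => sqrt (INR n) * theta n) nu ->
  weak_conv (fun n => F_A n (mu n) (theta n)) (fun x => if Rle_dec (- nu) x then 1 else 0).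
Proof.
  intros Heta Hnu x Hx. apply continuity_pt_step_neq in Hx.
  apply is_lim_seq_Reals in Heta, Hnu.
  assert (Hratio := is_lim_seq_div_abs_succ_of_cv _ _ sigma_infty 0 Heta).
  assert (Hsx : is_lim_seq (fun n => sqrt (INR n) * theta n + x) (nu + x))
    by (apply is_lim_seq_plus'; [exact Hnu | apply is_lim_seq_const]).
  apply Un_cv_F_A. destruct (Rle_dec (- nu) x).
  - apply is_lim_seq_Phi_lasso_1; [exact sigma_infty | exact Hratio |].
    apply (eventually_sigma_eta_of_sqrt_theta theta (fun t => 0 < t + x)).
    apply (eventually_gt_of_lim _ _ 0 Hsx). simpl. lra.
  - apply is_lim_seq_Phi_lasso_0; [exact sigma_infty | exact Hratio |].
    apply (eventually_sigma_eta_of_sqrt_theta theta (fun t => t + x < 0)).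
    apply (eventually_lt_of_lim _ _ 0 Hsx). simpl. lra.
Qed.

Lemma F_A_cv_0 theta :
  ((exists zeta, zeta < 0 /\ Un_cv (fun n => theta n / mu n) zeta) \/
   (Un_cv (fun n => theta n / mu n) 0 /\ cv_infty (fun n => - (sqrt (INR n) * theta n))) \/
   (cv_infty (fun n => - (theta n / mu n)) /\
    cv_infty (fun n => - (sqrt (INR n) * mu n ^ 2 / theta n)))) ->
  forall x, Un_cv (fun n => F_A n (mu n) (theta n) x) 0.
Proof.
  intros Hcase x. apply Un_cv_F_A.
  destruct Hcase as [[zeta [hz Hz]] | [[H0 Hs] | [He Hr]]].
  - apply is_lim_seq_Reals in Hz.
    apply is_lim_seq_Phi_lasso_0; [exact sigma_infty | |].
    + exact (is_lim_seq_div_abs_succ_of_cv _ _ sigma_infty zeta Hz).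
    + exact (eventually_sigma_eta_add_lt _ _ x sigma_infty zeta Hz hz).
  - apply is_lim_seq_Reals in H0. apply is_lim_seq_m_infty_of_cv_infty_opp in Hs.
    apply is_lim_seq_Phi_lasso_0; [exact sigma_infty | |].
    + exact (is_lim_seq_div_abs_succ_of_cv _ _ sigma_infty 0 H0).
    + apply (eventually_sigma_eta_of_sqrt_theta theta (fun t => t + x < 0)).
      apply (eventually_lt_of_lim _ m_infty); [|exact I].
      apply is_lim_seq_plus with m_infty x; [exact Hs | apply is_lim_seq_const | reflexivity].
  - apply is_lim_seq_m_infty_of_cv_infty_opp in He, Hr.
    apply is_lim_seq_sigma_div_eta in Hr.
    apply is_lim_seq_Phi_lasso_0; [exact sigma_infty | |].
    + apply is_lim_seq_div_abs_succ_of_infty; [exact sigma_infty | |].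
      * exact (is_lim_seq_abs _ m_infty He).
      * exact (is_lim_seq_abs _ m_infty Hr).
    + exact (eventually_sigma_eta_add_lt _ _ x sigma_infty m_infty He I).
Qed.

Lemma F_A_cv_1 theta :
  ((exists zeta, 0 < zeta /\ Un_cv (fun n => theta n / mu n) zeta) \/
   (Un_cv (fun n => theta n / mu n) 0 /\ cv_infty (fun n => sqrt (INR n) * theta n)) \/
   (cv_infty (fun n => theta n / mu n) /\
    cv_infty (fun n => sqrt (INR n) * mu n ^ 2 / theta n))) ->
  forall x, Un_cv (fun n => F_A n (mu n) (theta n) x) 1.
Proof.
  intros Hcase x. apply Un_cv_F_A.
  destruct Hcase as [[zeta [hz Hz]] | [[H0 Hs] | [He Hr]]].
  - apply is_lim_seq_Reals in Hz.
    apply is_lim_seq_Phi_lasso_1; [exact sigma_infty | |].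
    + exact (is_lim_seq_div_abs_succ_of_cv _ _ sigma_infty zeta Hz).
    + exact (eventually_sigma_eta_add_gt _ _ x sigma_infty zeta Hz hz).
  - apply is_lim_seq_Reals in H0. apply is_lim_seq_p_infty_Reals in Hs.
    apply is_lim_seq_Phi_lasso_1; [exact sigma_infty | |].
    + exact (is_lim_seq_div_abs_succ_of_cv _ _ sigma_infty 0 H0).
    + apply (eventually_sigma_eta_of_sqrt_theta theta (fun t => 0 < t + x)).
      apply (eventually_gt_of_lim _ p_infty); [|exact I].
      apply is_lim_seq_plus with p_infty x; [exact Hs | apply is_lim_seq_const | reflexivity].
  - apply is_lim_seq_p_infty_Reals in He, Hr.
    apply is_lim_seq_sigma_div_eta in Hr.
    apply is_lim_seq_Phi_lasso_1; [exact sigma_infty | |].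
    + apply is_lim_seq_div_abs_succ_of_infty; [exact sigma_infty | |].
      * exact (is_lim_seq_abs _ p_infty He).
      * exact (is_lim_seq_abs _ p_infty Hr).
    + exact (eventually_sigma_eta_add_gt _ _ x sigma_infty p_infty He I).
Qed.

Lemma F_A_weak_conv_shifted_Phi theta r :
  (cv_infty (fun n => theta n / mu n) \/ cv_infty (fun n => - (theta n / mu n))) ->
  Un_cv (fun n => sqrt (INR n) * mu n ^ 2 / theta n) r ->
  weak_conv (fun n => F_A n (mu n) (theta n)) (fun x => Phi (x + r)).
Proof.
  intros Hcase Hr x _. apply Un_cv_F_A.
  apply is_lim_seq_Reals, is_lim_seq_sigma_div_eta in Hr.
  apply is_lim_seq_Phi_lasso; [exact sigma_infty | | exact Hr].
  destruct Hcase as [He | He].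
  - exact (is_lim_seq_abs _ p_infty (proj2 (is_lim_seq_p_infty_Reals _) He)).
  - exact (is_lim_seq_abs _ m_infty (is_lim_seq_m_infty_of_cv_infty_opp _ He)).
Qed.

End AdaptiveLassoLimits.

Theorem theorem3 (mu : nat -> R)
  (hmu_pos : forall n : nat, (1 <= n)%nat -> 0 < mu n)
  (hmu0 : Un_cv mu 0)
  (hmuinf : cv_infty (fun n => sqrt (INR n) * mu n)) :
  (forall (theta : nat -> R) (nu : R),
     Un_cv (fun n => theta n / mu n) 0 ->
     Un_cv (fun n => sqrt (INR n) * theta n) nu ->
     weak_conv (fun n => F_A n (mu n) (theta n))
               (fun x => if Rle_dec (- nu) x then 1 else 0)) /\
  (forall theta : nat -> R,
     ((exists zeta, zeta < 0 /\ Un_cv (fun n => theta n / mu n) zeta) \/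
      (Un_cv (fun n => theta n / mu n) 0 /\
       cv_infty (fun n => - (sqrt (INR n) * theta n))) \/
      (cv_infty (fun n => - (theta n / mu n)) /\
       cv_infty (fun n => - (sqrt (INR n) * mu n ^ 2 / theta n)))) ->
     forall x : R, Un_cv (fun n => F_A n (mu n) (theta n) x) 0) /\
  (forall theta : nat -> R,
     ((exists zeta, 0 < zeta /\ Un_cv (fun n => theta n / mu n) zeta) \/
      (Un_cv (fun n => theta n / mu n) 0 /\
       cv_infty (fun n => sqrt (INR n) * theta n)) \/
      (cv_infty (fun n => theta n / mu n) /\
       cv_infty (fun n => sqrt (INR n) * mu n ^ 2 / theta n))) ->
     forall x : R, Un_cv (fun n => F_A n (mu n) (theta n) x) 1) /\
  (forall (theta : nat -> R) (r : R),
     (cv_infty (fun n => theta n / mu n) \/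
      cv_infty (fun n => - (theta n / mu n))) ->
     Un_cv (fun n => sqrt (INR n) * mu n ^ 2 / theta n) r ->
     weak_conv (fun n => F_A n (mu n) (theta n)) (fun x => Phi (x + r))).
Proof.
  split; [| split; [| split]].
  - exact (F_A_weak_conv_pointmass mu hmu_pos hmuinf).
  - exact (F_A_cv_0 mu hmu_pos hmuinf).
  - exact (F_A_cv_1 mu hmu_pos hmuinf).
  - exact (F_A_weak_conv_shifted_Phi mu hmu_pos hmuinf).
Qed.
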